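(* Let $A_1A_2A_3$ be a gyrotriangle in the Einstein gyrovector space $\mathbb{R}^n_s$ that possesses a circumgyrocircle, with circumgyrocenter $O$ and circumgyroradius $R$, and let $\gamma_{ij}=\gamma_{\ominus A_i\oplus A_j}$, $\gamma_R=(1-R^2/s^2)^{-1/2}$. Let $A\in(A_1\oplus\mathrm{span}\{\ominus A_1\oplus A_2,\ominus A_1\oplus A_3\})\cap\mathbb{R}^n_s$ have gyrobarycentric representation $A=\frac{m_1\gamma_{A_1}A_1+m_2\gamma_{A_2}A_2+m_3\gamma_{A_3}A_3}{m_1\gamma_{A_1}+m_2\gamma_{A_2}+m_3\gamma_{A_3}}$, and let $d=\|\ominus A\oplus O\|$. Then $$d=\sqrt{1-\frac{2s^2K}{M^2\gamma_R^2R^2}}\;R,$$ where $K=m_1m_2(\gamma_{12}-1)+m_1m_3(\gamma_{13}-1)+m_2m_3(\gamma_{23}-1)$ and $M=m_1+m_2+m_3$.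
   Context: Fix $s>0$, $n\ge2$; $\mathbb{R}^n_s=\{v\in\mathbb{R}^n:\|v\|<s\}$ with Einstein addition $u\oplus v=\frac{1}{1+u\cdot v/s^2}\{u+\frac{1}{\gamma_u}v+\frac{1}{s^2}\frac{\gamma_u}{1+\gamma_u}(u\cdot v)u\}$, $\gamma_v=(1-\|v\|^2/s^2)^{-1/2}$, $\ominus v=-v$. A gyrotriangle $A_1A_2A_3$ has $\ominus A_1\oplus A_2,\ominus A_1\oplus A_3$ linearly independent. Its circumgyrocenter is the point $O$ of $(A_1\oplus\mathrm{span}\{\ominus A_1\oplus A_2,\ominus A_1\oplus A_3\})\cap\mathbb{R}^n_s$ equigyrodistant from the vertices; the circumgyroradius is $R=\|\ominus A_1\oplus O\|$; the circumgyrocircle is the set of points of that gyroplane at gyrodistance $R$ from $O$. *)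

From HB Require Import structures.
From mathcomp Require Import all_boot all_order all_algebra.
Set Implicit Arguments. Unset Strict Implicit. Unset Printing Implicit Defensive.
Import Order.TTheory GRing.Theory Num.Theory.
Local Open Scope ring_scope.

Section Einstein.
Variables (R : rcfType) (n : nat) (s : R).

Definition edot (u v : 'rV[R]_n) : R := \sum_(i < n) u 0 i * v 0 i.
Definition enorm (v : 'rV[R]_n) : R := Num.sqrt (edot v v).

Definition in_ball (v : 'rV[R]_n) : Prop := enorm v < s.

Definition egamma (v : 'rV[R]_n) : R := (Num.sqrt (1 - enorm v ^+ 2 / s ^+ 2))^-1.

Definition eadd (u v : 'rV[R]_n) : 'rV[R]_n :=
  (1 + edot u v / s ^+ 2)^-1 *:
    (u + (egamma u)^-1 *: v
       + ((s ^+ 2)^-1 * (egamma u / (1 + egamma u)) * edot u v) *: u).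

Definition eminus_add (u v : 'rV[R]_n) : 'rV[R]_n := eadd (- u) v.

Definition lin_indep2 (u v : 'rV[R]_n) : Prop :=
  forall a b : R, a *: u + b *: v = 0 -> a = 0 /\ b = 0.

Definition gyrotriangle (A1 A2 A3 : 'rV[R]_n) : Prop :=
  [/\ in_ball A1, in_ball A2, in_ball A3 &
      lin_indep2 (eminus_add A1 A2) (eminus_add A1 A3)].

Definition in_gyroplane (A1 A2 A3 X : 'rV[R]_n) : Prop :=
  in_ball X /\
  exists a b : R,
    X = eadd A1 (a *: eminus_add A1 A2 + b *: eminus_add A1 A3).

Definition circumgyrocenter (A1 A2 A3 O : 'rV[R]_n) : Prop :=
  [/\ in_gyroplane A1 A2 A3 O,
      enorm (eminus_add A1 O) = enorm (eminus_add A2 O) &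
      enorm (eminus_add A1 O) = enorm (eminus_add A3 O)].

End Einstein.

From HB Require Import structures.
From mathcomp Require Import all_boot all_order all_algebra.
From mathcomp Require Import ring lra.
Import Order.TTheory GRing.Theory Num.Theory.
Local Open Scope ring_scope.
Set Implicit Arguments. Unset Strict Implicit.

(* Lift a point u of the ball to (1, u/s) in Minkowski space and write
   <u, v> = 1 - u.v/s^2 ([mdot] below) for the Minkowski product of lifts.  Then
   gamma_u^-2 = <u, u> and gamma_{(-u)(+)v} = gamma_u gamma_v <u, v>, so the gamma
   factor of the gyrodifference is the Minkowski product of the normalized lifts
   gamma_u (1, u/s).  Since <., .> is bilinear and the gyrobarycentric point A
   has lift proportional to sum_i m_i gamma_i (1, A_i/s), the product <A, O> is
   M gamma_R / (D gamma_O) (all vertices are at gyrodistance R from O) and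
   <A, A> = (M^2 + 2K) / D^2, where D = sum_i m_i gamma_i.  Substituting these
   into |(-A)(+)O|^2 = s^2 (1 - <A, A> <O, O> / <A, O>^2) gives the formula. *)

Lemma sqrtr_mul_sqr (R : rcfType) (a x : R) :
  0 <= x -> Num.sqrt a * x = Num.sqrt (x ^+ 2 * a).
Proof. by move=> x_ge0; rewrite sqrtrM ?sqr_ge0 // sqrtr_sqr ger0_norm // mulrC. Qed.

Section EuclideanDot.
Variables (R : rcfType) (n : nat).
Implicit Types (u v w : 'rV[R]_n).

Lemma edotC u v : edot u v = edot v u.
Proof. by apply: eq_bigr => i _; rewrite mulrC. Qed.

Lemma edotDl u v w : edot (u + v) w = edot u w + edot v w.
Proof. by rewrite /edot -big_split; apply: eq_bigr => i _; rewrite mxE mulrDl. Qed.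

Lemma edotZl a u w : edot (a *: u) w = a * edot u w.
Proof. by rewrite /edot mulr_sumr; apply: eq_bigr => i _; rewrite mxE mulrA. Qed.

Lemma edotDr u v w : edot w (u + v) = edot w u + edot w v.
Proof. by rewrite edotC edotDl !(edotC w). Qed.

Lemma edotZr a u w : edot w (a *: u) = a * edot w u.
Proof. by rewrite edotC edotZl edotC. Qed.

Lemma edotNl u w : edot (- u) w = - edot u w.
Proof. by rewrite -scaleN1r edotZl mulN1r. Qed.

Lemma edotNr u w : edot w (- u) = - edot w u.
Proof. by rewrite edotC edotNl edotC. Qed.

Lemma edot0l w : edot 0 w = 0.
Proof. by rewrite -(scale0r 0) edotZl mul0r. Qed.

Lemma edot_ge0 u : 0 <= edot u u.
Proof. by apply: sumr_ge0 => i _; rewrite -expr2 sqr_ge0. Qed.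

Lemma edot_eq0 u : edot u u = 0 -> u = 0.
Proof.
move=> u0; apply/rowP => i; rewrite mxE.
have sq_ge0 j : 0 <= u 0 j * u 0 j by rewrite -expr2 sqr_ge0.
have /eqP := psumr_eq0P (fun j _ => sq_ge0 j) u0 (i := i) isT.
by rewrite mulf_eq0 orbb => /eqP.
Qed.

Lemma enorm_ge0 u : 0 <= enorm u.
Proof. exact: sqrtr_ge0. Qed.

Lemma sqr_enorm u : enorm u ^+ 2 = edot u u.
Proof. by rewrite sqr_sqrtr ?edot_ge0. Qed.

Lemma enorm_eq0 u : enorm u = 0 -> u = 0.
Proof.
move=> /eqP; rewrite sqrtr_eq0 => u_le0.
by apply: edot_eq0; apply/eqP; rewrite eq_le u_le0 edot_ge0.
Qed.

End EuclideanDot.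

Section EinsteinGamma.
Variables (R : rcfType) (n : nat) (s : R).
Hypothesis s_gt0 : 0 < s.
Implicit Types (u v w : 'rV[R]_n).

Definition mdot u v : R := 1 - edot u v / s ^+ 2.

Let s_neq0 : s != 0. Proof. by rewrite gt_eqF. Qed.

Lemma mdotC u v : mdot u v = mdot v u.
Proof. by rewrite /mdot edotC. Qed.

Lemma sqr_enorm_mdot u : enorm u ^+ 2 = s ^+ 2 * (1 - mdot u u).
Proof. by rewrite sqr_enorm /mdot; field. Qed.

Lemma edot_self_lt u : in_ball s u -> edot u u < s ^+ 2.
Proof. by rewrite /in_ball -sqr_enorm => u_lt; have := enorm_ge0 u; nra. Qed.

Lemma edot_lt u v : in_ball s u -> in_ball s v -> edot u v < s ^+ 2.
Proof.
move=> /edot_self_lt uu_lt /edot_self_lt vv_lt.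
have := edot_ge0 (u - v); rewrite !(edotDl, edotDr, edotNl, edotNr) (edotC v u).
by lra.
Qed.

Lemma mdot_gt0 u v : in_ball s u -> in_ball s v -> 0 < mdot u v.
Proof.
by move=> bu bv; rewrite subr_gt0 ltr_pdivrMr ?exprn_gt0 // mul1r edot_lt.
Qed.

Lemma egammaE u : egamma s u = (Num.sqrt (mdot u u))^-1.
Proof. by rewrite /egamma sqr_enorm. Qed.

Lemma egamma_gt0 u : in_ball s u -> 0 < egamma s u.
Proof. by move=> bu; rewrite egammaE invr_gt0 sqrtr_gt0 mdot_gt0. Qed.

Lemma mdot_self u : in_ball s u -> mdot u u = egamma s u ^-2.
Proof. by move=> bu; rewrite egammaE exprVn invrK sqr_sqrtr // ltW // mdot_gt0. Qed.

Lemma egamma_eq_mdot w x : 0 < x -> mdot w w = x ^-2 -> egamma s w = x.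
Proof.
by move=> x_gt0; rewrite egammaE => ->; rewrite -exprVn sqrtr_sqr gtr0_norm ?invrK ?invr_gt0.
Qed.

Lemma egammaN u : egamma s (- u) = egamma s u.
Proof. by rewrite !egammaE /mdot edotNl edotC edotNl opprK. Qed.

Lemma eminus_addE u v :
  eminus_add s u v = (mdot u v)^-1 *:
    ((egamma s u / (1 + egamma s u) * edot u v / s ^+ 2 - 1) *: u
     + (egamma s u)^-1 *: v).
Proof.
rewrite /eminus_add /eadd egammaN edotNl mulNr /mdot.
by apply/rowP => i; rewrite !mxE; ring.
Qed.

Lemma mdot_eminus_add u v : in_ball s u -> in_ball s v ->
  mdot (eminus_add s u v) (eminus_add s u v) = mdot u u * mdot v v / mdot u v ^+ 2.
Proof.
move=> bu bv; have g_gt0 := egamma_gt0 bu.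
have uu_gamma : edot u u = s ^+ 2 * (1 - egamma s u ^-2).
  by rewrite -mdot_self // /mdot; field.
rewrite eminus_addE /mdot !(edotDl, edotDr, edotZl, edotZr) (edotC v u) uu_gamma.
field; rewrite s_neq0 subr_eq0 (gt_eqF (edot_lt bu bv)).
by rewrite !gt_eqF ?addr_gt0.
Qed.

Lemma egamma_eminus_add u v : in_ball s u -> in_ball s v ->
  egamma s (eminus_add s u v) = egamma s u * egamma s v * mdot u v.
Proof.
move=> bu bv; have gu := egamma_gt0 bu; have gv := egamma_gt0 bv.
apply: egamma_eq_mdot; first by rewrite !mulr_gt0 ?mdot_gt0.
rewrite mdot_eminus_add // (mdot_self bu) (mdot_self bv).
by field; rewrite !gt_eqF ?mdot_gt0.
Qed.

Lemma mdot_egamma u v : in_ball s u -> in_ball s v ->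
  mdot u v = egamma s (eminus_add s u v) / (egamma s u * egamma s v).
Proof.
move=> bu bv; rewrite egamma_eminus_add //.
by field; rewrite !gt_eqF ?egamma_gt0.
Qed.

Lemma egamma_eminus_addC u v : in_ball s u -> in_ball s v ->
  egamma s (eminus_add s u v) = egamma s (eminus_add s v u).
Proof. by move=> bu bv; rewrite !egamma_eminus_add // mdotC [_ * egamma s u]mulrC. Qed.

Lemma egamma_eminus_addss u : in_ball s u -> egamma s (eminus_add s u u) = 1.
Proof.
move=> bu; rewrite egamma_eminus_add // mdot_self //.
by field; rewrite gt_eqF ?egamma_gt0.
Qed.

(* A vanishing gyrodifference forces v to be a multiple c u, and then
   <u, u> <v, v> = <u, v>^2 reads (u.u/s^2) (1 - c)^2 = 0. *)
Lemma eminus_add_eq0 u v : in_ball s u -> in_ball s v -> eminus_add s u v = 0 -> u = v.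
Proof.
move=> bu bv w0; have := mdot_eminus_add bu bv; rewrite w0.
have [c v_def] : exists c, v = c *: u.
  move: w0; rewrite eminus_addE => /eqP; rewrite scaler_eq0 invr_eq0 gt_eqF ?mdot_gt0 //=.
  set a := _ - 1; set g := egamma s u.
  have g_neq0 : g != 0 by rewrite gt_eqF ?egamma_gt0.
  rewrite addrC addr_eq0 => /eqP gv; exists (- (g * a)).
  rewrite -[v]scale1r -(mulfV g_neq0) -scalerA gv.
  by rewrite scalerN scalerA scaleNr.
have uv_neq0 : mdot u v != 0 by rewrite gt_eqF ?mdot_gt0.
rewrite v_def /mdot !(edotZl, edotZr, edot0l) in uv_neq0 *.
move=> /esym/(canRL (divfK (expf_neq0 2 uv_neq0))) sq_eq.
have : edot u u / s ^+ 2 * (1 - c) ^+ 2 = 0 by lra.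
move=> /eqP; rewrite mulf_eq0 expf_eq0 /= mulf_eq0 invr_eq0 expf_eq0 /= (negPf s_neq0) orbF.
case/orP => [/eqP/edot_eq0 -> | ]; first by rewrite scaler0.
by rewrite subr_eq0 => /eqP <-; rewrite scale1r.
Qed.

Lemma mdot_bary3 (l1 l2 l3 : R) u1 u2 u3 v : l1 + l2 + l3 != 0 ->
  mdot ((l1 + l2 + l3)^-1 *: (l1 *: u1 + l2 *: u2 + l3 *: u3)) v =
    (l1 * mdot u1 v + l2 * mdot u2 v + l3 * mdot u3 v) / (l1 + l2 + l3).
Proof. by move=> l_neq0; rewrite /mdot !(edotZl, edotDl); field; rewrite l_neq0 s_neq0. Qed.

Definition gyrobary (m1 m2 m3 : R) (A1 A2 A3 : 'rV[R]_n) : 'rV[R]_n :=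
  (m1 * egamma s A1 + m2 * egamma s A2 + m3 * egamma s A3)^-1 *:
    ((m1 * egamma s A1) *: A1 + (m2 * egamma s A2) *: A2 + (m3 * egamma s A3) *: A3).

Section Gyrobarycentric.
Variables (m1 m2 m3 : R) (A1 A2 A3 : 'rV[R]_n).
Hypotheses (b1 : in_ball s A1) (b2 : in_ball s A2) (b3 : in_ball s A3).
Let D := m1 * egamma s A1 + m2 * egamma s A2 + m3 * egamma s A3.
Hypothesis D_neq0 : D != 0.

Lemma mdot_gyrobary v : in_ball s v ->
  mdot (gyrobary m1 m2 m3 A1 A2 A3) v =
    (m1 * egamma s (eminus_add s A1 v) + m2 * egamma s (eminus_add s A2 v)
      + m3 * egamma s (eminus_add s A3 v)) / (D * egamma s v).
Proof.
move=> bv; rewrite mdot_bary3 // !(mdot_egamma _ bv) //.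
by rewrite /D; field; rewrite D_neq0 !gt_eqF ?egamma_gt0.
Qed.

Lemma mdot_gyrobary_self :
  mdot (gyrobary m1 m2 m3 A1 A2 A3) (gyrobary m1 m2 m3 A1 A2 A3) =
    (m1 ^+ 2 + m2 ^+ 2 + m3 ^+ 2
     + 2 * (m1 * m2 * egamma s (eminus_add s A1 A2)
            + m1 * m3 * egamma s (eminus_add s A1 A3)
            + m2 * m3 * egamma s (eminus_add s A2 A3))) / D ^+ 2.
Proof.
set P := gyrobary _ _ _ _ _ _.
rewrite {1}/P /gyrobary mdot_bary3 // !(mdotC _ P) !mdot_gyrobary //.
rewrite !egamma_eminus_addss // (egamma_eminus_addC b2 b1) (egamma_eminus_addC b3 b1).
rewrite (egamma_eminus_addC b3 b2).
by rewrite /D; field; rewrite D_neq0 !gt_eqF ?egamma_gt0.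
Qed.

End Gyrobarycentric.

Lemma circumgyroradius_neq0 (A1 A2 A3 O : 'rV[R]_n) :
  gyrotriangle s A1 A2 A3 -> circumgyrocenter s A1 A2 A3 O ->
  enorm (eminus_add s A1 O) != 0.
Proof.
move=> [b1 b2 b3 indep] [[bO _] eqR2 eqR3]; apply/eqP => R0.
have at_center X : in_ball s X -> enorm (eminus_add s X O) = 0 -> X = O.
  by move=> bX /enorm_eq0; apply: eminus_add_eq0.
have e2 := at_center _ b2 (etrans (esym eqR2) R0).
have e3 := at_center _ b3 (etrans (esym eqR3) R0).
have := indep 1 (-1); rewrite e2 e3 scaleN1r scale1r subrr => /(_ erefl) [].
by move/eqP; rewrite oner_eq0.
Qed.

End EinsteinGamma.

Theorem mainTheorem12 (R : rcfType) (n : nat) (s : R)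
  (A1 A2 A3 O A : 'rV[R]_n) (m1 m2 m3 : R) :
  (2 <= n)%N -> 0 < s ->
  gyrotriangle s A1 A2 A3 ->
  circumgyrocenter s A1 A2 A3 O ->
  in_gyroplane s A1 A2 A3 A ->
  m1 * egamma s A1 + m2 * egamma s A2 + m3 * egamma s A3 != 0 ->
  A = (m1 * egamma s A1 + m2 * egamma s A2 + m3 * egamma s A3)^-1 *:
        ((m1 * egamma s A1) *: A1 + (m2 * egamma s A2) *: A2
           + (m3 * egamma s A3) *: A3) ->
  m1 + m2 + m3 != 0 ->
  let Rc := enorm (eminus_add s A1 O) in
  let gR := (Num.sqrt (1 - Rc ^+ 2 / s ^+ 2))^-1 in
  let g12 := egamma s (eminus_add s A1 A2) in
  let g13 := egamma s (eminus_add s A1 A3) in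
  let g23 := egamma s (eminus_add s A2 A3) in
  let K := m1 * m2 * (g12 - 1) + m1 * m3 * (g13 - 1) + m2 * m3 * (g23 - 1) in
  let M := m1 + m2 + m3 in
  enorm (eminus_add s A O) =
    Num.sqrt (1 - 2 * s ^+ 2 * K / (M ^+ 2 * gR ^+ 2 * Rc ^+ 2)) * Rc.
Proof.
move=> _ s_gt0 tri circ [bA _] D_neq0 A_bary M_neq0 Rc gR g12 g13 g23 K M.
have [b1 b2 b3 _] := tri; have [[bO _] eqR2 eqR3] := circ.
have A_def : A = gyrobary s m1 m2 m3 A1 A2 A3 := A_bary.
have Rc_neq0 : Rc != 0 := circumgyroradius_neq0 s_gt0 tri circ.
have egamma_to_O X : enorm (eminus_add s X O) = Rc -> egamma s (eminus_add s X O) = gR.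
  by rewrite /egamma => ->.
have gR_gt0 : 0 < gR.
  by rewrite -(egamma_to_O A1) // egamma_eminus_add // !mulr_gt0 ?egamma_gt0 ?mdot_gt0.
have mAO : mdot s A O = M * gR / ((m1 * egamma s A1 + m2 * egamma s A2
                                   + m3 * egamma s A3) * egamma s O).
  rewrite A_def mdot_gyrobary // (egamma_to_O A1) //.
  rewrite (egamma_to_O A2 (esym eqR2)) (egamma_to_O A3 (esym eqR3)) /M.
  by field; rewrite D_neq0 gt_eqF ?egamma_gt0.
have mAA := mdot_gyrobary_self s_gt0 b1 b2 b3 D_neq0; rewrite -A_def in mAA.
have m1O := mdot_egamma s_gt0 b1 bO; rewrite egamma_to_O // in m1O.
rewrite {1}/enorm sqrtr_mul_sqr ?enorm_ge0 // -sqr_enorm; congr Num.sqrt.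
have -> : Rc ^+ 2 * (1 - 2 * s ^+ 2 * K / (M ^+ 2 * gR ^+ 2 * Rc ^+ 2)) =
          Rc ^+ 2 - 2 * s ^+ 2 * K / (M ^+ 2 * gR ^+ 2).
  by field; rewrite Rc_neq0 M_neq0 gt_eqF.
rewrite /Rc !(sqr_enorm_mdot s_gt0) !(mdot_eminus_add s_gt0) // mAA mAO m1O.
rewrite !(mdot_self s_gt0) // /K /g12 /g13 /g23 /M.
field; rewrite (gt_eqF gR_gt0) (gt_eqF (egamma_gt0 s_gt0 bO)).
by rewrite (gt_eqF (egamma_gt0 s_gt0 b1)) D_neq0 M_neq0.
Qed.
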